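(* Let $n=2^\ell$, let $S=\{u_1,\dots,u_m\}\subseteq\mathbb{F}_2^d\setminus\{0\}$ be a set of $m$ distinct nonzero vectors, let $h:\mathbb{F}_2^d\to\mathbb{F}_2^\ell$ be a uniformly random linear map, fix $y\in\mathbb{F}_2^\ell$, let $Z_y:=|\{i:h(u_i)=y\}|$ and $\lambda:=m/n$. Then for every integer $a\ge1$, \[ \Pr[Z_y>2^a-2]\le\gamma^{-1}\lambda^a2^{-a^2}, \] where $\gamma:=\prod_{j=1}^\infty(1-2^{-j})$.
   Context: A uniformly random linear map is chosen uniformly among all linear maps $\mathbb{F}_2^d\to\mathbb{F}_2^\ell$. *)

From HB Require Import structures.
From mathcomp Require Import all_boot all_order all_algebra.
From mathcomp Require Import all_classical all_reals all_analysis.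
Set Implicit Arguments. Unset Strict Implicit. Unset Printing Implicit Defensive.
Import Order.TTheory GRing.Theory Num.Theory.
Local Open Scope ring_scope.

Definition gamma2 (R : realType) : R :=
  limn (fun N : nat => \prod_(1 <= j < N.+1) (1 - ((2 ^ j)%:R : R)^-1)).

(* A linear map h : F_2^d -> F_2^l is represented by a matrix A acting on
   row vectors: h u = u *m A.  Linear maps <-> matrices bijectively, so the
   uniform distribution on linear maps is the uniform (counting) distribution
   on 'M['F_2]_(d, l). *)
Definition lin_apply (d l : nat) (A : 'M['F_2]_(d, l)) (u : 'rV['F_2]_d)
  : 'rV['F_2]_l := u *m A.

Definition Zcount (d l : nat) (S : {set 'rV['F_2]_d}) (y : 'rV['F_2]_l)
  (A : 'M['F_2]_(d, l)) : nat := #|[set u in S | lin_apply A u == y]|.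

Definition prob_lin (R : realType) (d l : nat) (E : pred 'M['F_2]_(d, l)) : R :=
  (#|[set A : 'M['F_2]_(d, l) | E A]|%:R) / (#|{: 'M['F_2]_(d, l)}|%:R).

(* Double count the pairs (A, U) where A is a linear map and U is an a-tuple
   of linearly independent vectors of S, all sent to y by A.  If
   Z_y(A) >= 2^a - 1, the fibre of y in S contains at least
   prod_(i < a) (2^a - 2^i) such tuples, since the i-th vector only has to
   avoid the 2^i - 1 nonzero vectors spanned by the previous ones.
   Conversely, a fixed independent tuple is sent to (y, ..., y) by exactly a
   2^(-a l) fraction of the linear maps.  Hence
   Pr[Z_y >= 2^a - 1] * prod_(i < a) (2^a - 2^i) <= |S|^a 2^(-a l), and
   prod_(i < a) (2^a - 2^i) = 2^(a^2) prod_(j = 1..a) (1 - 2^-j)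
   >= 2^(a^2) gamma. *)

From HB Require Import structures.
From mathcomp Require Import all_boot all_order all_algebra.
From mathcomp Require Import all_classical all_reals all_analysis.
From mathcomp Require Import ring lra zify.
Import numFieldNormedType.Exports.
Set Implicit Arguments. Unset Strict Implicit. Unset Printing Implicit Defensive.
Import Order.TTheory GRing.Theory Num.Theory.
Local Open Scope ring_scope.

Section RowsIn.

Variable T : finType.

Definition rows_in m n (X : {set 'rV[T]_n}) (U : 'M[T]_(m, n)) : bool :=
  [forall i, row i U \in X].

Lemma card_set_col_mx m n (P : pred 'M[T]_(1 + m, n)) :
  #|[set W | P W]| = (\sum_(U : 'M[T]_(m, n)) #|[set v : 'rV[T]_n | P (col_mx v U)]|)%N.
Proof.
rewrite -sum1dep_card (reindex (fun p : ('M[T]_(m, n) * 'rV[T]_n)%type => col_mx p.2 p.1)) /=.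
  rewrite -(pair_big_dep xpredT (fun U v => P (col_mx v U)) (fun _ _ => 1%N)).
  by apply: eq_bigr => U _; rewrite sum1dep_card.
exists (fun W => (dsubmx W, usubmx W)) => [[U v] _ | W _] /=.
  by rewrite col_mxKd col_mxKu.
by rewrite vsubmxK.
Qed.

Lemma rows_in_col_mx m n (X : {set 'rV[T]_n}) v (U : 'M[T]_(m, n)) :
  rows_in X (col_mx v U) = (v \in X) && rows_in X U.
Proof.
apply/forallP/andP => [inX | [vX /forallP UX] i].
  split; first by have := inX (lshift m ord0); rewrite rowKu row_id.
  by apply/forallP => i; have := inX (rshift 1 i); rewrite rowKd.
rewrite -(splitK i); case: (fintype.split i) => j /=.
  by rewrite rowKu (ord1 j) row_id.
by rewrite rowKd.
Qed.

Lemma card_rows_in m n (X : {set 'rV[T]_n}) :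
  #|[set U : 'M[T]_(m, n) | rows_in X U]| = (#|X| ^ m)%N.
Proof.
elim: m => [|m IHm].
  transitivity #|[set: 'M[T]_(0, n)]|; last by rewrite cardsT card_mx.
  by apply: eq_card => U; rewrite !inE; apply/forallP => -[].
rewrite -[m.+1]/(1 + m)%N card_set_col_mx expnS -IHm mulnC -sum_nat_const.
rewrite [RHS]big_mkcond; apply: eq_bigr => U _; rewrite inE.
under eq_finset => v do rewrite rows_in_col_mx.
case: (rows_in X U).
  by under eq_finset => v do rewrite andbT; rewrite cardsE.
by under eq_finset => v do rewrite andbF; rewrite cards0.
Qed.

End RowsIn.

Lemma row_free_col_mx (F : fieldType) m n (v : 'rV[F]_n) (U : 'M[F]_(m, n)) :
  row_free U -> row_free (col_mx v U) = ~~ (v <= U)%MS.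
Proof.
move=> freeU; rewrite /row_free eqn_leq rank_leq_row /=.
rewrite -(leq_add2r (\rank (v :&: U)%MS)) -addsmxE mxrank_sum_cap (eqnP freeU).
rewrite addnAC leq_add2r.
by rewrite (ltn_leqif (mxrank_leqif_sup _)) ?capmxSl // sub_capmx submx_refl.
Qed.

Section FiniteField.

Variable F : finFieldType.
Local Notation q := #|F|.

Lemma card_submx_row_free m n (U : 'M[F]_(m, n)) :
  row_free U -> #|[set v : 'rV[F]_n | (v <= U)%MS]| = (q ^ m)%N.
Proof.
move=> freeU; have -> : [set v : 'rV[F]_n | (v <= U)%MS] = [set x *m U | x in 'rV[F]_m].
  by apply/setP => v; rewrite inE; apply/submxP/imsetP => [[x ->] | [x _ ->]]; exists x.
by rewrite card_imset ?card_mx ?mul1n //; apply: row_free_inj.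
Qed.

Lemma card_row_free_extensions_ge m n (X : {set 'rV[F]_n}) (U : 'M[F]_(m, n)) :
  0 \notin X -> row_free U -> rows_in X U ->
  (#|X| + 1 - q ^ m <=
     #|[set v : 'rV[F]_n | row_free (col_mx v U) && rows_in X (col_mx v U)]|)%N.
Proof.
move=> X0 freeU XU; set span := [set v : 'rV[F]_n | (v <= U)%MS].
have spanX : (#|X :&: span| <= q ^ m - 1)%N.
  rewrite -(card_submx_row_free freeU) -/span (cardsD1 0 span) inE sub0mx add1n subn1.
  apply: subset_leq_card; apply/fintype.subsetP => v; rewrite !inE => /andP[vX ->].
  by rewrite andbT; apply: contraNneq X0 => <-.
apply: (@leq_trans #|X :\: span|).
  have qm : (0 < q ^ m)%N by rewrite expn_gt0 ltnW ?card_finNzRing_gt1.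
  by rewrite cardsD; lia.
apply: subset_leq_card; apply/fintype.subsetP => v; rewrite !inE => /andP[vspan vX].
by rewrite row_free_col_mx // rows_in_col_mx vspan vX XU.
Qed.

Lemma card_row_free_rows_in_ge m n (X : {set 'rV[F]_n}) : 0 \notin X ->
  (\prod_(i < m) (#|X| + 1 - q ^ i) <=
     #|[set U : 'M[F]_(m, n) | row_free U && rows_in X U]|)%N.
Proof.
move=> X0; elim: m => [|m IHm].
  rewrite big_ord0 card_gt0; apply/set0Pn; exists 0.
  by rewrite inE -row_leq_rank; apply/forallP => -[].
rewrite big_ord_recr /= -[m.+1]/(1 + m)%N card_set_col_mx.
set good := [set U : 'M[F]_(m, n) | _] in IHm.
apply: (@leq_trans (#|good| * (#|X| + 1 - q ^ m))); first by rewrite leq_mul2r IHm orbT.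
rewrite -sum_nat_const (big_mkcond (mem good)) /=; apply: leq_sum => U _.
case: ifP => //; rewrite inE => /andP[freeU XU].
exact: card_row_free_extensions_ge.
Qed.

Lemma card_mulmx_eq m n p (U : 'M[F]_(m, n)) (Y : 'M[F]_(m, p)) : row_free U ->
  (#|[set A : 'M[F]_(n, p) | U *m A == Y]| * q ^ (m * p) = q ^ (n * p))%N.
Proof.
move=> freeU; pose fibre Y' := [set A : 'M[F]_(n, p) | U *m A == Y'].
have card_fibre Y' : #|fibre Y'| = #|fibre 0|.
  have [V UV] := row_freeP freeU.
  have -> : fibre Y' = [set V *m Y' + A | A in fibre 0].
    apply/setP => A; rewrite inE; apply/eqP/imsetP => [UA | [B]].
      exists (A - V *m Y'); last by rewrite addrC subrK.
      by rewrite inE mulmxBr UA mulmxA UV mul1mx subrr.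
    by rewrite inE => /eqP UB ->; rewrite mulmxDr UB addr0 mulmxA UV mul1mx.
  by rewrite card_imset //; apply: addrI.
transitivity (\sum_(Y' : 'M[F]_(m, p)) #|fibre Y'|)%N.
  by rewrite (eq_bigr _ (fun Y' _ => card_fibre Y')) sum_nat_const card_mx card_fibre mulnC.
rewrite -(card_mx F n p) -sum1_card (partition_big (mulmx U) xpredT) //=.
by apply: eq_bigr => Y' _; rewrite sum1dep_card.
Qed.

End FiniteField.

Section HeavyFibres.

Variables (F : finFieldType) (m n p : nat) (X : {set 'rV[F]_n}) (y : 'rV[F]_p).
Local Notation q := #|F|.
Local Notation Y := (\matrix_(i < m) y).

Definition fibre (A : 'M[F]_(n, p)) := [set u in X | u *m A == y].

Definition free_frames (A : 'M[F]_(n, p)) :=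
  [set U : 'M[F]_(m, n) | row_free U && rows_in (fibre A) U].

Lemma rows_in_fibre A (U : 'M[F]_(m, n)) :
  rows_in (fibre A) U = rows_in X U && (U *m A == Y).
Proof.
apply/forallP/andP => [inU | [/forallP XU /eqP UA] i].
  split; first by apply/forallP => i; have := inU i; rewrite inE => /andP[].
  apply/eqP/row_matrixP => i.
  by have := inU i; rewrite inE row_mul rowK => /andP[_ /eqP].
by rewrite inE XU -row_mul UA rowK /=.
Qed.

Lemma sum_card_free_frames :
  ((\sum_(A : 'M[F]_(n, p)) #|free_frames A|) * q ^ (m * p) =
    #|[set U : 'M[F]_(m, n) | row_free U && rows_in X U]| * q ^ (n * p))%N.
Proof.
have card_sum (T : finType) (P : pred T) : #|[set x | P x]| = (\sum_x P x)%N.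
  by rewrite -sum1dep_card big_mkcond.
rewrite (eq_bigr _ (fun A _ => card_sum _ _)) exchange_big big_distrl /=.
rewrite card_sum big_distrl /=; apply: eq_bigr => U _.
under eq_bigr => A _ do rewrite rows_in_fibre.
have [/andP[freeU XU] | bad] /= := boolP (row_free U && rows_in X U).
  by rewrite mul1n -(card_mulmx_eq Y freeU) card_sum freeU XU.
by rewrite big1 // => A _; move: bad; rewrite andbA => /negPf ->.
Qed.

Hypothesis X0 : 0 \notin X.

Lemma card_free_frames_ge A : (q ^ m <= #|fibre A|.+1)%N ->
  (\prod_(i < m) (q ^ m - q ^ i) <= #|free_frames A|)%N.
Proof.
move=> heavy; have fibre0 : 0 \notin fibre A by rewrite inE negb_and X0.
apply: leq_trans (card_row_free_rows_in_ge m fibre0).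
by apply: leq_prod => i _; apply: leq_sub2r; lia.
Qed.

Lemma card_heavy_fibres_le :
  (#|[set A : 'M[F]_(n, p) | q ^ m <= #|fibre A|.+1]| * \prod_(i < m) (q ^ m - q ^ i)
     * q ^ (m * p) <= #|X| ^ m * q ^ (n * p))%N.
Proof.
set heavy := [set A | _].
apply: (@leq_trans ((\sum_A #|free_frames A|) * q ^ (m * p))).
  rewrite leq_mul2r -sum_nat_const; apply/orP; right.
  apply: (@leq_trans (\sum_(A in heavy) #|free_frames A|)).
    by apply: leq_sum => A; rewrite inE; apply: card_free_frames_ge.
  by rewrite [leqRHS](bigID (mem heavy)) leq_addr.
rewrite sum_card_free_frames leq_mul2r -(card_rows_in m X); apply/orP; right.
by apply: subset_leq_card; apply/fintype.subsetP => U; rewrite !inE => /andP[].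
Qed.

End HeavyFibres.

Section Gamma2.

Variable R : realType.

Definition gamma2_partial (N : nat) : R :=
  \prod_(1 <= j < N.+1) (1 - ((2 ^ j)%:R : R)^-1).

Lemma gamma2_partialS N :
  gamma2_partial N.+1 = gamma2_partial N * (1 - ((2 ^ N.+1)%:R)^-1).
Proof. by rewrite /gamma2_partial big_nat_recr. Qed.

Lemma inv_pow2_gt0 k : 0 < ((2 ^ k)%:R : R)^-1.
Proof. by rewrite invr_gt0 ltr0n expn_gt0. Qed.

Lemma inv_pow2_le k : ((2 ^ k.+2)%:R : R)^-1 <= 1 / 4.
Proof.
rewrite div1r lef_pV2 ?posrE ?ltr0n ?expn_gt0 // (_ : 4 = (2 ^ 2)%:R) //.
by rewrite ler_nat leq_pexp2l.
Qed.

(* The slack [2^-(N+2)] in the bound is what makes the induction go through. *)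
Lemma gamma2_partialS_ge N : 1 / 4 + ((2 ^ N.+2)%:R)^-1 <= gamma2_partial N.+1.
Proof.
elim: N => [|N IHN].
  by rewrite gamma2_partialS /gamma2_partial big_geq // mul1r; lra.
rewrite gamma2_partialS; set r := ((2 ^ N.+2)%:R : R)^-1 in IHN *.
have r_gt0 : 0 < r := inv_pow2_gt0 _.
have r_le : r <= 1 / 4 := inv_pow2_le _.
rewrite [X in _ + X <= _](_ : _ = r / 2); last by rewrite expnS natrM invfM mulrC.
nra.
Qed.

Lemma gamma2_partial_ge N : 1 / 4 <= gamma2_partial N.
Proof.
case: N => [|N]; first by rewrite /gamma2_partial big_geq //; lra.
by have := gamma2_partialS_ge N; have := inv_pow2_gt0 N.+2; lra.
Qed.

Lemma gamma2_partial_noninc : nonincreasing_seq gamma2_partial.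
Proof.
apply/nonincreasing_seqP => N; rewrite gamma2_partialS.
by have := gamma2_partial_ge N; have := inv_pow2_gt0 N.+1; nra.
Qed.

Lemma gamma2_partial_cvg : cvgn gamma2_partial.
Proof.
apply: nonincreasing_is_cvgn gamma2_partial_noninc _.
by exists (1 / 4) => _ [N _ <-]; apply: gamma2_partial_ge.
Qed.

Lemma gamma2_le_partial N : gamma2 R <= gamma2_partial N.
Proof. exact: nonincreasing_cvgn_ge gamma2_partial_noninc gamma2_partial_cvg N. Qed.

Lemma gamma2_gt0 : 0 < gamma2 R.
Proof.
apply: (@lt_le_trans _ _ (1 / 4)); first lra.
apply: limr_ge gamma2_partial_cvg _.
by near=> N; apply: gamma2_partial_ge.
Unshelve. all: by end_near.
Qed.

Lemma natr_prod_pow2_sub a :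
  ((\prod_(i < a) (2 ^ a - 2 ^ i))%N%:R : R) = (2 ^ (a * a))%:R * gamma2_partial a.
Proof.
rewrite natr_prod (eq_bigr (fun i : 'I_a => (2 ^ a)%:R * (1 - ((2 ^ (a - i))%:R)^-1))).
  rewrite big_split prodr_const card_ord -natrX -expnM; congr (_ * _).
  rewrite -(big_mkord xpredT (fun i => 1 - ((2 ^ (a - i))%:R)^-1)) big_nat_rev.
  rewrite /gamma2_partial big_add1; apply: eq_big_nat => i /andP[_ lt_ia].
  by rewrite add0n subKn.
move=> i _; have le_ia : (i <= a)%N := ltnW (ltn_ord i).
rewrite natrB ?leq_pexp2l // mulrBr mulr1.
have -> : (2 ^ a)%:R = (2 ^ i)%:R * (2 ^ (a - i))%:R :> R.
  by rewrite -natrM -expnD subnKC.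
by rewrite mulfK // pnatr_eq0 expn_eq0.
Qed.

End Gamma2.

Lemma le_prob_lin (R : realType) d l (E E' : pred 'M['F_2]_(d, l)) :
  (forall A, E A -> E' A) -> prob_lin R E <= prob_lin R E'.
Proof.
move=> EE'; rewrite /prob_lin ler_wpM2r ?invr_ge0 // ler_nat.
by apply: subset_leq_card; apply/fintype.subsetP => A; rewrite !inE; apply: EE'.
Qed.

Lemma prob_lin_heavy_fibres_le (R : realType) d l (S : {set 'rV['F_2]_d})
    (y : 'rV['F_2]_l) a : 0 \notin S ->
  prob_lin R (fun A => 2 ^ a <= (Zcount S y A).+1)%N
    * ((2 ^ (a * a))%:R * gamma2_partial R a) <= (#|S|%:R / (2 ^ l)%:R) ^+ a.
Proof.
(* [#|'F_2|] unfolds to [(Zp_trunc (pdiv 2)).+2], which also occurs in the type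
   of [fibre]; so it is turned into [2] by conversion rather than by rewriting. *)
move=> S0; have := card_heavy_fibres_le a y S0.
rewrite card_ord -[(Zp_trunc _).+2]/2%N => heavy.
rewrite /prob_lin card_mx card_Fp // expr_div_n -!natrX -expnM -natr_prod_pow2_sub.
rewrite mulrAC ler_pdivrMr ?ltr0n ?expn_gt0 // mulrAC ler_pdivlMr ?ltr0n ?expn_gt0 //.
by rewrite -!natrM ler_nat [(l * a)%N]mulnC.
Qed.

Theorem corollaryB2 (R : realType) (d l : nat) (S : {set 'rV['F_2]_d})
  (y : 'rV['F_2]_l) (a : nat) :
  (0 : 'rV['F_2]_d) \notin S ->
  (1 <= a)%N ->
  prob_lin R (fun A => (2 ^ a - 2 < Zcount S y A)%N)
    <= (gamma2 R)^-1 * ((#|S|%:R / (2 ^ l)%:R) ^+ a) * ((2 ^ (a * a))%:R)^-1.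
Proof.
move=> S0 _.
set P := prob_lin R _; set L := _ ^+ a; set c : R := (2 ^ (a * a))%:R.
have c_gt0 : 0 < c by rewrite ltr0n expn_gt0.
have gamma_gt0 := gamma2_gt0 R.
have P_heavy : P <= prob_lin R (fun A => 2 ^ a <= (Zcount S y A).+1)%N.
  by apply: le_prob_lin => A; lia.
have : P * (c * gamma2 R) <= L.
  apply: le_trans (prob_lin_heavy_fibres_le R y a S0).
  apply: ler_pM => //; first by rewrite divr_ge0.
    by rewrite mulr_ge0 ?ltW.
  by apply: ler_wpM2l; [exact: ltW | exact: gamma2_le_partial].
have -> : (gamma2 R)^-1 * L / c = L / (c * gamma2 R).
  by field; rewrite !gt_eqF.
by rewrite ler_pdivlMr ?mulr_gt0.
Qed.
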